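(* Let $\hat q,\hat p$ be $n\times n$ parametric matrices and let $M$ be an invertible $n\times n$ $(\hat q,\hat p)$-Manin matrix over $\mathfrak R$. Let $1\le m\le n$, let $I=(i_1<\dots<i_m)$ be an increasing multi-index and $J=(j_1,\dots,j_m)$ a multi-index with distinct entries, both with entries in $\{1,\dots,n\}$. Then $$\sum_K\varepsilon(\hat p,K^{\tau})\,\mathrm{cdet}_{\hat q}(M_{IK})\,\mathrm{cdet}_{\hat p'}((M^{-1})_{KJ})=\varepsilon(\hat q,J^{\tau})\,\delta_{I,J^{or}},$$ where the sum is over all increasing multi-indices $K=(k_1<\dots<k_m)$ with entries in $\{1,\dots,n\}$, and $\hat p'=(p'_{ij})$ with $p'_{ij}=p_{ij}^{-1}$. In particular, for $m=n$, $$\mathrm{cdet}_{\hat q}(M)\,\mathrm{cdet}_{\hat p'}(M^{-1})=\varepsilon(\hat p,\tau)^{-1}\varepsilon(\hat q,\tau),$$ where $\tau=(n,n-1,\dots,1)$.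
   Context: $\mathfrak R$ is an associative unital algebra over $\mathbb C$. A parametric $n\times n$ matrix is a matrix $\hat q=(q_{ij})$ of nonzero complex numbers with $q_{ij}q_{ji}=1$, $q_{ii}=1$. An $n\times n$ matrix $M$ over $\mathfrak R$ is a $(\hat q,\hat p)$-Manin matrix if $M_{ik}M_{jk}=q_{ji}M_{jk}M_{ik}$ for $i<j$ and all $k$, and $M_{ik}M_{jl}-q_{ji}p_{kl}M_{jl}M_{ik}+p_{kl}M_{il}M_{jk}-q_{ji}M_{jk}M_{il}=0$ for $i<j$, $k<l$. For a multi-index $I=(i_1,\dots,i_r)$: $I^{\tau}=(i_r,\dots,i_1)$ is its reverse; $I^{or}$ is its nondecreasing rearrangement; $\varepsilon(\hat q,I)=0$ if two entries coincide, otherwise $\varepsilon(\hat q,I)=\prod_{s<t,\ i_s>i_t}(-q_{i_si_t})$. For increasing $I=(i_1<\dots<i_r)$ and $\sigma\in S_r$, $\varepsilon(\hat q,I,\sigma)=\prod_{s<t,\ \sigma(s)>\sigma(t)}(-q_{i_{\sigma(s)}i_{\sigma(t)}})$. For any matrix $X$, increasing $I$ and any multi-index $J=(j_1,\dots,j_r)$, $\mathrm{cdet}_{\hat q}(X_{IJ})=\sum_{\sigma\in S_r}\varepsilon(\hat q,I,\sigma)X_{i_{\sigma(1)},j_1}\cdots X_{i_{\sigma(r)},j_r}$ (same formula with any parametric matrix in place of $\hat q$); $\mathrm{cdet}_{\hat q}(X)$ is the case $I=J=(1,\dots,n)$. $\delta_{I,J^{or}}$ is $1$ if $I=J^{or}$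 and $0$ otherwise. *)

From HB Require Import structures.
From mathcomp Require Import all_boot all_order all_algebra all_fingroup.
From mathcomp Require Import complex.
From mathcomp Require Import reals Rstruct.
Set Implicit Arguments. Unset Strict Implicit. Unset Printing Implicit Defensive.
Import Order.TTheory GRing.Theory Num.Theory.
Local Open Scope ring_scope.

Definition CC : Type := complex Rdefinitions.R.
HB.instance Definition _ := GRing.Field.on CC.

(* Indices 1..n are represented by 'I_n (0-based, order-preserving). *)

Definition parametric (n : nat) (q : 'M[CC]_n) : Prop :=
  forall i j : 'I_n, q i j != 0 /\ q i j * q j i = 1 /\ q i i = 1.

Definition manin (A : algType CC) (n : nat) (q p : 'M[CC]_n) (M : 'M[A]_n) : Prop :=
  (forall i j k : 'I_n, (i < j)%N ->
     M i k * M j k = q j i *: (M j k * M i k)) /\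
  (forall i j k l : 'I_n, (i < j)%N -> (k < l)%N ->
     M i k * M j l - (q j i * p k l) *: (M j l * M i k)
     + p k l *: (M i l * M j k) - q j i *: (M j k * M i l) = 0).

Definition increasing (m n : nat) (I : 'I_m -> 'I_n) : Prop :=
  forall s t : 'I_m, (s < t)%N -> (I s < I t)%N.

Definition mrev (m n : nat) (I : 'I_m -> 'I_n) : 'I_m -> 'I_n :=
  fun s => I (rev_ord s).

Definition eps (n : nat) (q : 'M[CC]_n) (m : nat) (I : 'I_m -> 'I_n) : CC :=
  if [forall s : 'I_m, forall t : 'I_m, (s != t) ==> (I s != I t)]
  then \prod_(s : 'I_m) \prod_(t : 'I_m | (s < t)%N && (I t < I s)%N)
          (- q (I s) (I t))
  else 0.

Definition eps_perm (n : nat) (q : 'M[CC]_n) (m : nat) (I : 'I_m -> 'I_n)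
    (sigma : 'S_m) : CC :=
  \prod_(s : 'I_m) \prod_(t : 'I_m | (s < t)%N && (sigma t < sigma s)%N)
     (- q (I (sigma s)) (I (sigma t))).

Definition cdet (A : algType CC) (n : nat) (q : 'M[CC]_n) (X : 'M[A]_n)
    (m : nat) (I J : 'I_m -> 'I_n) : A :=
  \sum_(sigma : 'S_m)
     eps_perm q I sigma *: \prod_(s < m) X (I (sigma s)) (J s).

Definition morder (m n : nat) (J : 'I_m -> 'I_n) : seq nat :=
  sort leq [seq val (J s) | s <- enum 'I_m].

Definition delta_or (m n : nat) (I J : 'I_m -> 'I_n) : CC :=
  if [seq val (I s) | s <- enum 'I_m] == morder J then 1 else 0.

Definition pinv (n : nat) (p : 'M[CC]_n) : 'M[CC]_n := map_mx GRing.inv p.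

(* For a (q,p)-Manin matrix M the column determinant cdet_q(M_IL) is p-skew in
   its columns: the second Manin relation, read on 2x2 column determinants, says
   that exchanging two adjacent columns multiplies cdet_q(M_IL) by -p_(l_t+1, l_t),
   and the first one makes it vanish when two columns coincide.  Bubble-sorting the
   columns gives eps(p,K^tau) eps(p',K,sigma) cdet_q(M_IK) = cdet_q(M_I,(K sigma)^tau)
   for increasing K, so expanding cdet_p'((M^-1)_KJ) turns the sum over increasing K
   into a sum over all maps L.  Summing over L contracts M against M^-1 from the middle
   of the product outwards and leaves the sum of eps(q,I,tau) over the tau with
   (I tau)^tau = J, which is eps(q,J^tau) delta_(I,J^or).  For m = n the only
   increasing K is the identity. *)

From HB Require Import structures.
From mathcomp Require Import all_boot all_order all_algebra all_fingroup.
From mathcomp Require Import zify.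
Set Implicit Arguments. Unset Strict Implicit. Unset Printing Implicit Defensive.
Import Order.TTheory GRing.Theory Num.Theory.
Local Open Scope ring_scope.

Section IncreasingMaps.
Variables m n : nat.
Implicit Types (I K : 'I_m -> 'I_n).

Lemma increasing_ltn I : increasing I -> forall s t, (I s < I t)%N = (s < t)%N.
Proof.
move=> HI s t; case: (ltngtP s t) => [/HI // | /HI /ltnW /leq_gtF // | /val_inj ->].
exact: ltnn.
Qed.

Lemma increasing_inj I : increasing I -> injective I.
Proof.
by move=> HI s t e; apply: val_inj; case: (ltngtP s t) => // /HI; rewrite e ltnn.
Qed.

Lemma increasing_leq_sub I : increasing I ->
  forall s t : 'I_m, (s <= t)%N -> (I s + (t - s) <= I t)%N.
Proof.
move=> HI s [t lt_tm]; elim: t lt_tm => [|t IH] lt_tm /=.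
  by rewrite leqn0 => /eqP s0; rewrite s0 addn0 (_ : s = Ordinal lt_tm) //; apply: val_inj.
rewrite leq_eqVlt => /orP[/eqP s_t | le_st].
  by rewrite s_t subnn addn0 (_ : s = Ordinal lt_tm) //; apply: val_inj.
have lt_tm' : (t < m)%N by apply: ltnW.
have := HI (Ordinal lt_tm') (Ordinal lt_tm) (ltnSn t).
have := IH lt_tm' le_st; rewrite /= subSn //.
move: (I s : nat) (I (Ordinal lt_tm') : nat) (I (Ordinal lt_tm) : nat) => a b c; lia.
Qed.

Lemma increasing_sorted K : increasing K -> sorted leq [seq val (K s) | s <- enum 'I_m].
Proof.
move=> HK; have : sorted ltn [seq val s | s <- enum 'I_m] by rewrite val_enum_ord iota_ltn_sorted.
by rewrite !sorted_map; apply: sub_sorted => s t /HK /ltnW.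
Qed.

Lemma increasing_perm_decomp (L : 'I_m -> 'I_n) : injective L ->
  exists K, exists2 rho : 'S_m, increasing K & forall s, L s = K (rho s).
Proof.
move=> injL; pose r s := #|[set u | (L u < L s)%N]|.
have r_lt s : (r s < m)%N.
  rewrite -[m]card_ord; apply/proper_card/properP.
  by split; [apply/subsetP | exists s => //; rewrite inE ltnn].
have r_mono s u : (L s < L u)%N -> (r s < r u)%N.
  move=> lt_su; apply/proper_card/properP; split; last by exists s; rewrite inE ?ltnn.
  by apply/subsetP => v; rewrite !inE => /ltn_trans; apply.
have r_ltE s u : (r s < r u)%N = (L s < L u)%N.
  case: (ltngtP (L s) (L u)) => [/r_mono // | /r_mono /ltnW /leq_gtF // | /val_inj /injL ->].
  exact: ltnn.
have r_inj : injective (fun s => Ordinal (r_lt s)).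
  move=> s u /(congr1 val) /= e; apply: injL; apply: val_inj.
  by case: (ltngtP (L s) (L u)) => // /r_mono; rewrite e ltnn.
pose rho := perm r_inj.
have rhoE s : val (rho s) = r s by rewrite permE.
exists (fun a => L ((rho^-1)%g a)), rho; last by move=> s; rewrite permK.
move=> a b; rewrite -r_ltE -rhoE -[r _]rhoE !permKV; exact.
Qed.

End IncreasingMaps.

Lemma increasing_ord_id m (f : 'I_m -> 'I_m) : increasing f -> forall s, f s = s.
Proof.
move=> Hf s; apply: val_inj; have lt_sm := ltn_ord s.
have lt_0m : (0 < m)%N by lia.
have lt_lastm : (m.-1 < m)%N by lia.
have le_s_last : (s <= m.-1)%N by lia.
have := increasing_leq_sub Hf (s := Ordinal lt_0m) (t := s) (leq0n s).
have := increasing_leq_sub Hf (s := s) (t := Ordinal lt_lastm) le_s_last.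
by move: (ltn_ord (f (Ordinal lt_lastm))) => /=; lia.
Qed.

Lemma increasing_reindex_id m n (K K' : 'I_m -> 'I_n) (pi : 'I_m -> 'I_m) :
  increasing K -> increasing K' -> (forall s, K s = K' (pi s)) -> forall s, pi s = s.
Proof.
move=> HK HK' E; apply: increasing_ord_id => s t lt_st.
by rewrite -(increasing_ltn HK') -!E HK.
Qed.

Lemma big_ord_adjacent (R : Type) (idx : R) (op : Monoid.law idx) m (F : 'I_m -> R)
    (t t1 : 'I_m) : val t1 = (val t).+1 ->
  \big[op/idx]_(s < m) F s =
  op (op (\big[op/idx]_(s < m | (s < t)%N) F s) (op (F t) (F t1)))
     (\big[op/idx]_(s < m | (t1 < s)%N) F s).
Proof.
case: m F t t1 => [|m] F t t1 /= e; first by have := ltn_ord t.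
pose G i := F (inord i).
have EF (P : pred nat) :
    \big[op/idx]_(s < m.+1 | P s) F s = \big[op/idx]_(0 <= i < m.+1 | P i) G i.
  by rewrite big_mkord; apply: eq_bigr => s _; rewrite /G inord_val.
rewrite (EF xpredT) (EF (fun i => i < t)%N) (EF (fun i => t1 < i)%N).
have -> : F t = G t by rewrite /G inord_val.
have -> : F t1 = G t.+1 by rewrite -e /G inord_val.
have lt_t1m := ltn_ord t1; rewrite e in lt_t1m.
rewrite (@big_cat_nat _ _ _ t 0 m.+1) /=; try lia.
rewrite (@big_ltn _ _ _ t m.+1) ?(@big_ltn _ _ _ t.+1 m.+1); try lia.
have -> : \big[op/idx]_(0 <= i < m.+1 | (i < t)%N) G i = \big[op/idx]_(0 <= i < t) G i.
  by rewrite (@big_nat_widen _ _ _ 0 t m.+1) //; lia.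
rewrite (@big_cat_nat _ _ _ t.+2 0 m.+1) /=; try lia.
have -> : \big[op/idx]_(0 <= i < t.+2 | (t1 < i)%N) G i = idx.
  by rewrite big_nat_cond big_pred0 // => i; apply/negbTE/negP => /andP[/andP[_ ?] ?]; lia.
have -> : \big[op/idx]_(t.+2 <= i < m.+1 | (t1 < i)%N) G i
          = \big[op/idx]_(t.+2 <= i < m.+1) G i.
  rewrite big_nat_cond [RHS]big_nat_cond; apply: eq_bigl => i.
  by rewrite andbT; case: (ltnP t1 i); rewrite ?andbT ?andbF //; lia.
by rewrite Monoid.mul1m !Monoid.mulmA.
Qed.

Lemma big_pairs_tperm_adjacent (R : Type) (idx : R) (op : Monoid.com_law idx) m
    (t t1 : 'I_m) (G : 'I_m -> 'I_m -> R) : val t1 = (val t).+1 ->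
  op (\big[op/idx]_(s : 'I_m) \big[op/idx]_(u : 'I_m | (s < u)%N)
        G (tperm t t1 s) (tperm t t1 u)) (G t t1)
  = op (\big[op/idx]_(s : 'I_m) \big[op/idx]_(u : 'I_m | (s < u)%N) G s u) (G t1 t).
Proof.
move=> /= e; set sw := tperm t t1; rewrite !pair_big_dep.
rewrite (reindex_inj (h := fun x : 'I_m * 'I_m => (sw x.1, sw x.2))) /=; last first.
  by move=> [a b] [c d] /= [/perm_inj -> /perm_inj ->].
rewrite (eq_bigr (fun x => G x.1 x.2)); last by move=> x _; rewrite !tpermK.
rewrite (bigD1 (t1, t)) /=; last by rewrite /sw tpermR tpermL; lia.
rewrite [in RHS](bigD1 (t, t1)) /=; last lia.
rewrite (eq_bigl (fun x : 'I_m * 'I_m => (x.1 < x.2)%N && (x != (t, t1)))); last first.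
  have val_sw z :
      val (sw z) = if val z == t then val t1 else if val z == t1 then val t else val z.
    rewrite /sw; case: tpermP => [->|->|zt zt1]; first by rewrite eqxx.
      by case: eqP => [->|_]; rewrite ?eqxx.
    by case: eqP => [/val_inj //|_]; case: eqP => [/val_inj //|_].
  move=> [a b]; rewrite /= !val_sw !xpair_eqE -!val_eqE /=.
  move: (val a) (val b) (val t) (val t1) e => a' b' t' t1' ->.
  by repeat case: eqP => ? /=; lia.
by rewrite Monoid.mulmAC [RHS]Monoid.mulmAC; congr (op _ _); apply: Monoid.mulmC.
Qed.

Lemma sum_perm_pairs (V : nmodType) m (t t1 : 'I_m) (f : 'S_m -> V) : t != t1 ->
  \sum_(sg : 'S_m) f sg = \sum_(sg : 'S_m | (sg t < sg t1)%N) (f sg + f (tperm t t1 * sg)%g).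
Proof.
move=> t_neq_t1; rewrite (bigID (fun sg : 'S_m => (sg t < sg t1)%N)) big_split /=.
congr (_ + _); rewrite (reindex_inj (mulgI (tperm t t1))); apply: eq_bigl => sg /=.
by rewrite !permM tpermL tpermR -leqNgt ltn_neqAle val_eqE (inj_eq perm_inj) t_neq_t1.
Qed.

Lemma adjacent_neq m (t t1 : 'I_m) : val t1 = (val t).+1 -> t != t1.
Proof. by move=> e; rewrite -val_eqE e neq_ltn ltnSn. Qed.

Lemma tperm_adjacent_out m (t t1 s : 'I_m) : val t1 = (val t).+1 ->
  (s < t)%N || (t1 < s)%N -> tperm t t1 s = s.
Proof.
move=> e out; apply: tpermD; apply/eqP => /(congr1 (@nat_of_ord m));
  by move: out e => /=; lia.
Qed.

Lemma decreasing_adjacent m (f : 'I_m -> nat) :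
  (forall t t1 : 'I_m, val t1 = (val t).+1 -> (f t1 < f t)%N) ->
  forall s u : 'I_m, (s < u)%N -> (f u < f s)%N.
Proof.
move=> Hf s [u lt_um] /=; elim: u lt_um => [|u IH] lt_um //.
rewrite ltnS leq_eqVlt => /orP [/eqP s_u | lt_su]; first by apply: Hf => /=; rewrite s_u.
have lt_um' : (u < m)%N by apply: ltnW.
have := IH lt_um' lt_su; have := Hf (Ordinal lt_um') (Ordinal lt_um) erefl; rewrite /=; lia.
Qed.

Definition noninversions m (sg : 'S_m) : nat :=
  \sum_(s : 'I_m) \sum_(u : 'I_m | (s < u)%N) (sg s < sg u : nat).

Lemma noninversions_tperm m (sg : 'S_m) (t t1 : 'I_m) :
  val t1 = (val t).+1 -> (sg t < sg t1)%N ->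
  (noninversions (tperm t t1 * sg)%g).+1 = noninversions sg.
Proof.
move=> e lt_sg; rewrite /noninversions.
have := big_pairs_tperm_adjacent addn (fun x y => (sg x < sg y : nat)) e.
rewrite /= lt_sg (leq_gtF (ltnW lt_sg)) addn0 addn1 => <-.
by congr _.+1; apply: eq_bigr => s _; apply: eq_bigr => u _; rewrite !permM.
Qed.

Lemma perm_ind_adjacent m (P : 'S_m -> Prop) :
  (forall sg : 'S_m, (forall s, sg s = rev_ord s) -> P sg) ->
  (forall (sg : 'S_m) (t t1 : 'I_m), val t1 = (val t).+1 -> (sg t < sg t1)%N ->
     P (tperm t t1 * sg)%g -> P sg) ->
  forall sg, P sg.
Proof.
move=> Prev Pstep sg; have [k] := ubnP (noninversions sg); elim: k sg => // k IH sg lt_k.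
case: (pickP [pred tt : 'I_m * 'I_m | (val tt.2 == (val tt.1).+1) && (sg tt.1 < sg tt.2)%N]).
  move=> [t t1] /andP[/eqP e lt_sg]; apply: (Pstep _ t t1 e lt_sg); apply: IH.
  by rewrite -ltnS (noninversions_tperm e lt_sg).
move=> no_ascent; apply: Prev.
have sg_dec : forall s u : 'I_m, (s < u)%N -> (sg u < sg s)%N.
  apply: (decreasing_adjacent (f := fun x => val (sg x))) => t t1 e.
  have := no_ascent (t, t1); rewrite /= e eqxx /= => /negbT; rewrite -leqNgt leq_eqVlt.
  case/orP=> [/eqP/val_inj/perm_inj t1_t|//]; by move: e; rewrite t1_t; lia.
have sg_rev_id : increasing (fun s => sg (rev_ord s)).
  by move=> a b lt_ab; apply: sg_dec => /=; move: (ltn_ord a) (ltn_ord b); lia.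
by move=> s; rewrite -[in LHS](rev_ordK s) (increasing_ord_id sg_rev_id).
Qed.

Section ParametricMatrices.
Variables (n : nat) (Q : 'M[CC]_n).
Hypothesis HQ : parametric Q.

Lemma parametric_neq0 a b : Q a b != 0.
Proof. by case: (HQ a b). Qed.

Lemma parametric_mul_swap a b : Q a b * Q b a = 1.
Proof. by case: (HQ a b) => _ []. Qed.

Lemma pinvE a b : pinv Q a b = Q b a.
Proof.
by rewrite mxE -[Q b a]mul1r -(mulVf (parametric_neq0 a b)) -mulrA parametric_mul_swap mulr1.
Qed.

End ParametricMatrices.

Lemma eq_eps n (Q : 'M[CC]_n) m (I I' : 'I_m -> 'I_n) : I =1 I' -> eps Q I = eps Q I'.
Proof.
move=> E; rewrite /eps.
have -> : [forall s, forall t, (s != t) ==> (I s != I t)] =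
          [forall s, forall t, (s != t) ==> (I' s != I' t)].
  by apply: eq_forallb => s; apply: eq_forallb => t; rewrite !E.
by case: ifP => // _; apply: eq_bigr => s _; apply: eq_big => [t|t _]; rewrite !E.
Qed.

Lemma eps_inj n (Q : 'M[CC]_n) m (J : 'I_m -> 'I_n) : injective J ->
  eps Q J = \prod_(s : 'I_m) \prod_(t : 'I_m | (s < t)%N && (J t < J s)%N) - Q (J s) (J t).
Proof.
move=> injJ; rewrite /eps; case: forallP => // -[] s.
by apply/forallP => t; apply/implyP; rewrite (inj_eq injJ).
Qed.

Lemma eps_perm_increasing n (Q : 'M[CC]_n) m (I : 'I_m -> 'I_n) (sg : 'S_m) :
  increasing I -> eps_perm Q I sg = eps Q (fun s => I (sg s)).
Proof.
move=> HI; rewrite eps_inj; last by move=> s t /(increasing_inj HI) /perm_inj.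
by apply: eq_bigr => s _; apply: eq_bigl => t; rewrite (increasing_ltn HI).
Qed.

Lemma eps_pinv n (Q : 'M[CC]_n) m (J : 'I_m -> 'I_n) : parametric Q -> injective J ->
  eps Q J * eps (pinv Q) J = 1.
Proof.
move=> HQ injJ; rewrite !eps_inj // -big_split /=; apply: big1 => s _.
rewrite -big_split /=; apply: big1 => t _.
by rewrite mulrNN mxE mulfV // parametric_neq0.
Qed.

Lemma eps_perm_tperm n (Q : 'M[CC]_n) m (J : 'I_m -> 'I_n) (sg : 'S_m) (t t1 : 'I_m) :
  val t1 = (val t).+1 -> (sg t < sg t1)%N ->
  eps_perm Q J (tperm t t1 * sg)%g = - Q (J (sg t1)) (J (sg t)) * eps_perm Q J sg.
Proof.
move=> e lt_sg.
pose G (x y : 'I_m) := if (sg y < sg x)%N then - Q (J (sg x)) (J (sg y)) else 1.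
have -> : eps_perm Q J sg = \prod_(s : 'I_m) \prod_(u : 'I_m | (s < u)%N) G s u.
  by apply: eq_bigr => s _; rewrite big_mkcondr.
have -> : eps_perm Q J (tperm t t1 * sg)%g =
    \prod_(s : 'I_m) \prod_(u : 'I_m | (s < u)%N) G (tperm t t1 s) (tperm t t1 u).
  by apply: eq_bigr => s _; rewrite big_mkcondr; apply: eq_bigr => u _; rewrite !permM.
have Gtt1 : G t t1 = 1 by rewrite /G (leq_gtF (ltnW lt_sg)).
have Gt1t : G t1 t = - Q (J (sg t1)) (J (sg t)) by rewrite /G lt_sg.
have := big_pairs_tperm_adjacent *%R G e; rewrite /= Gtt1 Gt1t mulr1 => ->.
exact: mulrC.
Qed.

Lemma eq_cdet n (Q : 'M[CC]_n) (A : algType CC) (X : 'M[A]_n) m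
    (I I' L L' : 'I_m -> 'I_n) :
  I =1 I' -> L =1 L' -> cdet Q X I L = cdet Q X I' L'.
Proof.
move=> EI EL; apply: eq_bigr => sg _; congr (_ *: _).
  by apply: eq_bigr => s _; apply: eq_bigr => t _; rewrite !EI.
by apply: eq_bigr => s _; rewrite EI EL.
Qed.

Section ManinMatrix.
Variables (n : nat) (q p : 'M[CC]_n) (A : algType CC) (M : 'M[A]_n).
Hypotheses (Hq : parametric q) (Hp : parametric p) (HM : manin q p M).

(* cdet_q of the minor of M with rows (a, b) and columns (k, l), when a < b. *)
Definition cdet2 (a b k l : 'I_n) : A := M a k * M b l - q b a *: (M b k * M a l).

Lemma cdet2_swap_rows a b k l : cdet2 a b k l = - q b a *: cdet2 b a k l.
Proof.
rewrite /cdet2 scalerBr scalerA mulNr parametric_mul_swap // scaleN1r opprK scaleNr.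
exact: addrC.
Qed.

Lemma cdet2_same_col_lt (a b k : 'I_n) : (a < b)%N -> cdet2 a b k k = 0.
Proof. by move=> lt_ab; rewrite /cdet2 (HM.1 a b k lt_ab) subrr. Qed.

Lemma cdet2_same_col (a b k : 'I_n) : a != b -> cdet2 a b k k = 0.
Proof.
rewrite -val_eqE; case: (ltngtP a b) => // lt_ab _; first exact: cdet2_same_col_lt.
by rewrite cdet2_swap_rows cdet2_same_col_lt ?scaler0.
Qed.

Lemma cdet2_swap_cols_lt (a b k l : 'I_n) : (a < b)%N -> (k < l)%N ->
  cdet2 a b k l + p k l *: cdet2 a b l k = 0.
Proof.
move=> lt_ab lt_kl; rewrite -(HM.2 a b k l lt_ab lt_kl) /cdet2 scalerBr scalerA.
rewrite [p k l * _]mulrC; set x := M a k * M b l; set y := q b a *: _.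
set z := p k l *: _; set w := (q b a * p k l) *: _.
by rewrite addrA addrAC [x - y - w]addrAC [_ - y + z]addrAC.
Qed.

Lemma cdet2_swap_cols (a b k l : 'I_n) : a != b -> cdet2 a b l k = - p l k *: cdet2 a b k l.
Proof.
wlog lt_ab : a b / (a < b)%N.
  move=> wlog_lt ne_ab; case: (ltngtP a b) => [lt_ab | lt_ba | /val_inj eq_ab].
  - exact: wlog_lt.
  - have ne_ba : b != a by rewrite eq_sym.
    rewrite cdet2_swap_rows [cdet2 a b k l]cdet2_swap_rows wlog_lt //.
    by rewrite !scalerA mulrC.
  - by rewrite eq_ab eqxx in ne_ab.
move=> _; case: (ltngtP k l) => [lt_kl | lt_lk | /val_inj ->].
- apply/eqP; rewrite -subr_eq0 scaleNr opprK addrC -[X in _ + X]scale1r.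
  rewrite -(parametric_mul_swap Hp l k).
  by rewrite -scalerA -scalerDr cdet2_swap_cols_lt // scaler0.
- by apply/eqP; rewrite scaleNr -addr_eq0 cdet2_swap_cols_lt.
- by rewrite cdet2_same_col_lt // scaler0.
Qed.

Variables (m : nat) (I : 'I_m -> 'I_n).
Hypothesis HI : increasing I.

Lemma cdet_terms_tperm (L : 'I_m -> 'I_n) (sg : 'S_m) (t t1 : 'I_m) :
  val t1 = (val t).+1 -> (sg t < sg t1)%N ->
  eps_perm q I sg *: \prod_(s < m) M (I (sg s)) (L s)
  + eps_perm q I (tperm t t1 * sg)%g *: \prod_(s < m) M (I ((tperm t t1 * sg)%g s)) (L s)
  = eps_perm q I sg *:
     (\prod_(s < m | (s < t)%N) M (I (sg s)) (L s)
      * cdet2 (I (sg t)) (I (sg t1)) (L t) (L t1)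
      * \prod_(s < m | (t1 < s)%N) M (I (sg s)) (L s)).
Proof.
move=> e lt_sg; rewrite (eps_perm_tperm _ _ e lt_sg) mulrC -scalerA -scalerDr.
congr (_ *: _); rewrite !(big_ord_adjacent _ _ e) /= !permM tpermL tpermR.
have -> : \prod_(s < m | (s < t)%N) M (I ((tperm t t1 * sg)%g s)) (L s) =
          \prod_(s < m | (s < t)%N) M (I (sg s)) (L s).
  by apply: eq_bigr => s lt_st; rewrite permM tperm_adjacent_out ?lt_st.
have -> : \prod_(s < m | (t1 < s)%N) M (I ((tperm t t1 * sg)%g s)) (L s) =
          \prod_(s < m | (t1 < s)%N) M (I (sg s)) (L s).
  by apply: eq_bigr => s lt_t1s; rewrite permM tperm_adjacent_out ?lt_t1s ?orbT.
by rewrite /cdet2 mulrBr mulrBl scaleNr -scalerAr -scalerAl.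
Qed.

Lemma rows_neq_adjacent (sg : 'S_m) (t t1 : 'I_m) :
  val t1 = (val t).+1 -> I (sg t) != I (sg t1).
Proof.
move=> /= e; rewrite (inj_eq (increasing_inj HI)) (inj_eq perm_inj) -val_eqE /= e.
by rewrite neq_ltn ltnSn.
Qed.

Lemma cdet_adjacent_eq (L : 'I_m -> 'I_n) (t t1 : 'I_m) :
  val t1 = (val t).+1 -> L t = L t1 -> cdet q M I L = 0.
Proof.
move=> e eq_L; have t_neq_t1 := adjacent_neq e.
rewrite /cdet (sum_perm_pairs _ t_neq_t1) big1 // => sg lt_sg.
by rewrite cdet_terms_tperm // eq_L cdet2_same_col ?rows_neq_adjacent // mulr0 mul0r scaler0.
Qed.

Lemma cdet_tperm_adjacent (L : 'I_m -> 'I_n) (t t1 : 'I_m) : val t1 = (val t).+1 ->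
  cdet q M I (fun s => L (tperm t t1 s)) = - p (L t1) (L t) *: cdet q M I L.
Proof.
move=> e; have t_neq_t1 := adjacent_neq e.
rewrite /cdet !(sum_perm_pairs _ t_neq_t1) scaler_sumr; apply: eq_bigr => sg lt_sg.
rewrite !cdet_terms_tperm // tpermL tpermR cdet2_swap_cols ?rows_neq_adjacent //.
have -> : \prod_(s < m | (s < t)%N) M (I (sg s)) (L (tperm t t1 s)) =
          \prod_(s < m | (s < t)%N) M (I (sg s)) (L s).
  by apply: eq_bigr => s lt_st; rewrite tperm_adjacent_out ?lt_st.
have -> : \prod_(s < m | (t1 < s)%N) M (I (sg s)) (L (tperm t t1 s)) =
          \prod_(s < m | (t1 < s)%N) M (I (sg s)) (L s).
  by apply: eq_bigr => s lt_t1s; rewrite tperm_adjacent_out ?lt_t1s ?orbT.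
by rewrite -scalerAr -scalerAl !scalerA mulrC.
Qed.

Lemma cdet_eq_cols (L : 'I_m -> 'I_n) (s u : 'I_m) :
  s != u -> L s = L u -> cdet q M I L = 0.
Proof.
wlog lt_su : s u / (s < u)%N.
  move=> wlog_lt ne_su eq_L; case: (ltngtP s u) => [lt_su | lt_us | /val_inj eq_su].
  - exact: (wlog_lt s u).
  - by apply: (wlog_lt u s); rewrite // eq_sym.
  - by rewrite eq_su eqxx in ne_su.
move=> _; have [d e] : exists d, (u : nat) = (s + d.+1)%N by exists (u - s.+1)%N; lia.
elim: d L u e {lt_su} => [|d IH] L u e eq_L.
  by apply: (cdet_adjacent_eq (t := s) (t1 := u)) => //=; rewrite e addn1.
have lt_pred_u : (u.-1 < m)%N by move: (ltn_ord u); lia.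
pose u' := Ordinal lt_pred_u.
have e' : val u = (val u').+1 by rewrite /= e; lia.
apply: (scalerI (a := - p (L u) (L u'))); first by rewrite oppr_eq0 parametric_neq0.
rewrite scaler0 -cdet_tperm_adjacent //; apply: (IH _ u'); first by rewrite /= e; lia.
rewrite tpermL tpermD // -val_eqE /= e; lia.
Qed.

Lemma cdet_perm_cols (K : 'I_m -> 'I_n) (sg : 'S_m) : increasing K ->
  (eps p (mrev K) * eps_perm (pinv p) K sg) *: cdet q M I K
  = cdet q M I (fun s => K (sg (rev_ord s))).
Proof.
move=> HK; elim/perm_ind_adjacent: sg => [sg sg_rev | sg t t1 e lt_sg IH].
  rewrite (eq_cdet _ _ (I' := I) (L' := K)) //; last by move=> s; rewrite sg_rev rev_ordK.
  rewrite eps_perm_increasing // (eq_eps (pinv p) (I' := mrev K)); last first.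
    by move=> s; rewrite sg_rev.
  by rewrite eps_pinv ?scale1r // => s u /(increasing_inj HK) /rev_ord_inj.
have e' : val (rev_ord t) = (val (rev_ord t1)).+1 by move: (ltn_ord t1) e => /=; lia.
move: IH; pose L s := K (sg (rev_ord s)).
have -> : cdet q M I (fun s => K ((tperm t t1 * sg)%g (rev_ord s))) =
          cdet q M I (fun s => L (tperm (rev_ord t1) (rev_ord t) s)).
  by apply: eq_cdet => // s; rewrite permM /L (inj_tperm _ _ _ rev_ord_inj) !rev_ordK tpermC.
rewrite (eps_perm_tperm _ _ e lt_sg) pinvE // mulrCA cdet_tperm_adjacent //.
rewrite /L !rev_ordK => IH.
apply: (scalerI (a := - p (K (sg t)) (K (sg t1)))); first by rewrite oppr_eq0 parametric_neq0.
by rewrite scalerA IH.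
Qed.

End ManinMatrix.

Definition increasingb m n (K : 'I_m -> 'I_n) : bool :=
  [forall s : 'I_m, forall t : 'I_m, (s < t)%N ==> (K s < K t)%N].

Lemma increasingP m n (K : 'I_m -> 'I_n) : reflect (increasing K) (increasingb K).
Proof.
apply: (iffP idP) => [/forallP H s t lt_st | HK].
  by move/forallP/(_ t): (H s); rewrite lt_st.
by apply/forallP => s; apply/forallP => t; apply/implyP; apply: HK.
Qed.

Lemma sum_increasing_perm (V : nmodType) m n (F : {ffun 'I_m -> 'I_n} -> V) :
  (forall L : {ffun 'I_m -> 'I_n}, ~~ injectiveb L -> F L = 0) ->
  \sum_(K : {ffun 'I_m -> 'I_n} | increasingb K) \sum_(sg : 'S_m) F [ffun s => K (sg s)]
  = \sum_L F L.
Proof.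
move=> F0; rewrite pair_big_dep /=.
pose h (x : {ffun 'I_m -> 'I_n} * 'S_m) := [ffun s => x.1 (x.2 s)].
pose D := [set x : {ffun 'I_m -> 'I_n} * 'S_m | increasingb x.1].
rewrite (eq_bigl (fun x => x \in D)); last by move=> x; rewrite inE andbT.
rewrite -(big_imset F (h := h)); last first.
  move=> [K sg] [K' sg']; rewrite !inE /= => /increasingP HK /increasingP HK' /ffunP eq_h.
  have E s : K (sg s) = K' (sg' s) by have := eq_h s; rewrite !ffunE.
  have id_sg : forall s, (sg^-1 * sg')%g s = s.
    by apply: (increasing_reindex_id HK HK') => s; rewrite permM -E permKV.
  have eq_K : K = K' by apply/ffunP => s; rewrite -[in RHS](id_sg s) permM -E permKV.
  by congr pair => //; apply/permP => s; apply: (increasing_inj HK); rewrite E eq_K.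
rewrite [RHS](bigID (fun L : {ffun 'I_m -> 'I_n} => injectiveb L)) /=.
rewrite [X in _ = _ + X]big1 ?addr0; last by move=> L /F0.
apply: eq_bigl => L; apply/imsetP/injectiveP => [[[K sg]] | injL].
  by rewrite inE => /increasingP HK -> s u; rewrite !ffunE => /(increasing_inj HK) /perm_inj.
have [K [rho HK E]] := increasing_perm_decomp injL.
exists ([ffun s => K s], rho).
  by rewrite inE; apply/increasingP => s t; rewrite !ffunE; apply: HK.
by apply/ffunP => s; rewrite !ffunE E.
Qed.

Definition ffun_cons m (T : finType) (x : T) (L : {ffun 'I_m -> T}) : {ffun 'I_m.+1 -> T} :=
  [ffun s => if unlift ord0 s is Some s' then L s' else x].

Lemma ffun_cons0 m (T : finType) (x : T) (L : {ffun 'I_m -> T}) : ffun_cons x L ord0 = x.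
Proof. by rewrite ffunE unlift_none. Qed.

Lemma ffun_consS m (T : finType) (x : T) (L : {ffun 'I_m -> T}) s :
  ffun_cons x L (lift ord0 s) = L s.
Proof. by rewrite ffunE liftK. Qed.

Lemma sum_ffun_cons (V : nmodType) m (T : finType) (G : {ffun 'I_m.+1 -> T} -> V) :
  \sum_(L : {ffun 'I_m.+1 -> T}) G L = \sum_(x : T) \sum_(L : {ffun 'I_m -> T}) G (ffun_cons x L).
Proof.
rewrite pair_bigA /=.
have cons_bij : bijective (fun xL : T * {ffun 'I_m -> T} => ffun_cons xL.1 xL.2).
  exists (fun L : {ffun 'I_m.+1 -> T} => (L ord0, [ffun s => L (lift ord0 s)])).
    move=> [x L] /=; rewrite ffun_cons0; congr pair.
    by apply/ffunP => s; rewrite ffunE ffun_consS.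
  by move=> L; apply/ffunP => s; rewrite ffunE; case: unliftP => [s' ->|->]; rewrite ?ffunE.
by rewrite (reindex _ (onW_bij _ cons_bij)).
Qed.

(* The innermost factors X (a ord_max) (L ord0) * Y (L ord0) (b ord0) are adjacent;
   summing over L ord0 produces an entry of X *m Y, and induction peels the next pair. *)
Lemma sum_ffun_contract (R : pzRingType) n (X Y : 'M[R]_n) : X *m Y = 1%:M ->
  forall m (a b : 'I_m -> 'I_n),
  \sum_(L : {ffun 'I_m -> 'I_n})
     (\prod_(s < m) X (a s) (L (rev_ord s))) * \prod_(s < m) Y (L s) (b s)
  = if [forall s, a (rev_ord s) == b s] then 1 else 0.
Proof.
move=> XY1; elim=> [|m IH] a b.
  rewrite (eq_bigr (fun _ => 1)); last by move=> L _; rewrite !big_ord0 mulr1.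
  rewrite sumr_const card_ffun !card_ord expn0.
  by case: forallP => // -[] [].
have rev_widen (s : 'I_m) : rev_ord (widen_ord (leqnSn m) s) = lift ord0 (rev_ord s).
  by apply: val_inj; rewrite /= /bump /=; move: (ltn_ord s); lia.
have rev_lift (s : 'I_m) : rev_ord (lift ord0 s) = widen_ord (leqnSn m) (rev_ord s).
  by apply: val_inj; rewrite /= /bump /=; move: (ltn_ord s); lia.
have rev_max : rev_ord (@ord_max m) = ord0 by apply: val_inj => /=; lia.
pose a' s := a (widen_ord (leqnSn m) s); pose b' s := b (lift ord0 s).
have middle : \sum_x X (a ord_max) x * Y x (b ord0) = ((a ord_max == b ord0)%:R : R).
  by have := congr1 (fun Z : 'M[R]_n => Z (a ord_max) (b ord0)) XY1; rewrite !mxE.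
have regroup L x :
    (\prod_(s < m.+1) X (a s) (ffun_cons x L (rev_ord s)))
      * \prod_(s < m.+1) Y (ffun_cons x L s) (b s)
    = (\prod_(s < m) X (a' s) (L (rev_ord s))) * (X (a ord_max) x * Y x (b ord0))
      * \prod_(s < m) Y (L s) (b' s).
  rewrite big_ord_recr big_ord_recl /= rev_max ffun_cons0 !mulrA.
  by congr (_ * _ * _ * _); apply: eq_bigr => s _; rewrite ?rev_widen ffun_consS.
have split_match : [forall s, a (rev_ord s) == b s]
    = (a ord_max == b ord0) && [forall s, a' (rev_ord s) == b' s].
  apply/forallP/andP => [match_ab | [match0 /forallP match_ab'] s].
    split; first by have := match_ab ord0; rewrite -rev_max rev_ordK.
    by apply/forallP => s; have := match_ab (lift ord0 s); rewrite rev_lift.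
  case: (unliftP ord0 s) => [s' ->|->]; first by rewrite rev_lift match_ab'.
  by rewrite -[ord0 in rev_ord ord0]rev_max rev_ordK.
rewrite sum_ffun_cons exchange_big /= split_match.
rewrite (eq_bigr (fun L : {ffun 'I_m -> 'I_n} => (\prod_(s < m) X (a' s) (L (rev_ord s)))
    * ((a ord_max == b ord0)%:R : R) * \prod_(s < m) Y (L s) (b' s))); last first.
  by move=> L _; rewrite -middle mulr_sumr mulr_suml; apply: eq_bigr => x _; rewrite regroup.
case: (a ord_max == b ord0); last by rewrite big1 // => L _; rewrite mulr0 mul0r.
by rewrite -(IH a' b'); apply: eq_bigr => L _; rewrite mulr1.
Qed.

Lemma delta_or_increasing_perm m n (I J K : 'I_m -> 'I_n) (rho : 'S_m) :
  increasing K -> (forall s, J s = K (rho s)) ->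
  delta_or I J = if [forall s, I s == K s] then 1 else 0.
Proof.
move=> HK EJ; rewrite /delta_or.
have -> : morder J = [seq val (K s) | s <- enum 'I_m].
  rewrite /morder; apply: (sorted_eq leq_trans anti_leq).
  - exact: (sort_sorted leq_total).
  - exact: increasing_sorted.
  have -> : [seq val (J s) | s <- enum 'I_m]
            = [seq val (K s) | s <- [seq rho s | s <- enum 'I_m]].
    by rewrite -[RHS]map_comp; apply/eq_in_map => s _; rewrite /= EJ.
  rewrite perm_sort; apply: perm_map; apply: uniq_perm => [||s].
  - by rewrite (map_inj_uniq perm_inj) enum_uniq.
  - exact: enum_uniq.
  by rewrite mem_enum; apply/mapP; exists ((rho^-1)%g s); rewrite ?mem_enum ?permKV.
congr (if _ then _ else _); apply/eqP/forallP => [/eq_in_map E s | E].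
  by apply/eqP/val_inj/E; rewrite mem_enum.
by apply/eq_in_map => s _; rewrite (eqP (E s)).
Qed.

Lemma sum_eps_perm_match n m (q : 'M[CC]_n) (A : algType CC) (I J : 'I_m -> 'I_n) :
  increasing I -> injective J ->
  \sum_(tau : 'S_m) eps_perm q I tau *:
      ((if [forall s, I (tau (rev_ord s)) == J s] then 1 else 0) : A)
  = (eps q (mrev J) * delta_or I J)%:A.
Proof.
move=> HI injJ; have [K [rho HK EJ]] := increasing_perm_decomp injJ.
rewrite (delta_or_increasing_perm I HK EJ).
have match_rel tau : [forall s, I (tau (rev_ord s)) == J s] ->
    forall s, K s = I (tau (rev_ord ((rho^-1)%g s))).
  by move=> /forallP match_IJ s; rewrite -[in LHS](permKV rho s) -EJ; apply/esym/eqP.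
case: forallP => [eq_IK | neq_IK]; last first.
  rewrite mulr0 scale0r big1 // => tau _; case: ifP => [/match_rel E|]; last by rewrite scaler0.
  by case: neq_IK => s; rewrite E (increasing_reindex_id HK HI E) ?eqxx.
pose tau0 := (perm (@rev_ord_inj m) * rho)%g.
have tau0E s : tau0 s = rho (rev_ord s) by rewrite permM permE.
have match0 : [forall s, I (tau0 (rev_ord s)) == J s].
  by apply/forallP => s; rewrite tau0E rev_ordK EJ (eqP (eq_IK _)).
rewrite (bigD1 tau0) //= match0 big1 ?addr0; last first.
  move=> tau ne_tau; case: ifP => [/match_rel E|]; last by rewrite scaler0.
  case/eqP: ne_tau; apply/permP => s.
  by have := increasing_reindex_id HK HI E (rho (rev_ord s)); rewrite permK rev_ordK tau0E => ->.
rewrite mulr1 eps_perm_increasing //; congr (_ *: _).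
by apply: eq_eps => s; rewrite tau0E /mrev EJ (eqP (eq_IK _)).
Qed.

Section ManinInverse.
Variables (n : nat) (q p : 'M[CC]_n) (A : algType CC) (M Minv : 'M[A]_n).
Hypotheses (Hq : parametric q) (Hp : parametric p) (HM : manin q p M).
Hypothesis HMMinv : M *m Minv = 1%:M.

Lemma cdet_minor_inverse_sum m (I J : 'I_m -> 'I_n) : increasing I -> injective J ->
  \sum_(K : {ffun 'I_m -> 'I_n} | increasingb K)
     eps p (mrev K) *: (cdet q M I K * cdet (pinv p) Minv K J)
  = (eps q (mrev J) * delta_or I J)%:A.
Proof.
move=> HI injJ.
pose F (L : {ffun 'I_m -> 'I_n}) :=
  cdet q M I (fun s => L (rev_ord s)) * \prod_(s < m) Minv (L s) (J s).
transitivity (\sum_(K : {ffun 'I_m -> 'I_n} | increasingb K)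
                \sum_(sg : 'S_m) F [ffun s => K (sg s)]).
  apply: eq_bigr => K /increasingP HK; rewrite [cdet _ Minv _ _]/cdet mulr_sumr scaler_sumr.
  apply: eq_bigr => sg _; rewrite -scalerAr scalerA scalerAl cdet_perm_cols // /F.
  by congr (_ * _); [apply: eq_cdet => s | apply: eq_bigr => s _]; rewrite ?ffunE.
rewrite sum_increasing_perm; last first.
  move=> L /injectivePn [s [u ne_su eq_L]].
  rewrite /F (cdet_eq_cols Hq Hp HM HI (s := rev_ord s) (u := rev_ord u)) ?mul0r ?rev_ordK //.
  by rewrite (inj_eq rev_ord_inj).
rewrite -(sum_eps_perm_match q A HI injJ).
under eq_bigr => L _ do rewrite /F /cdet mulr_suml.
rewrite exchange_big; apply: eq_bigr => tau _.
rewrite -(sum_ffun_contract HMMinv (fun s => I (tau s)) J) scaler_sumr.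
by apply: eq_bigr => L _; rewrite scalerAl.
Qed.

Lemma cdet_mul_cdet_inverse :
  cdet q M id id * cdet (pinv p) Minv id id
  = ((eps p (@rev_ord n))^-1 * eps q (@rev_ord n))%:A.
Proof.
have incr_id : increasing (@id 'I_n) by [].
have := cdet_minor_inverse_sum incr_id (@inj_id _).
rewrite (bigD1 [ffun s => s]) /=; last by apply/increasingP => s t; rewrite !ffunE.
rewrite big1 ?addr0; last first.
  move=> K /andP[/increasingP HK]; case/eqP; apply/ffunP => s.
  by rewrite ffunE (increasing_ord_id HK).
have ffun_id : [ffun s : 'I_n => s] =1 id by move=> s; rewrite ffunE.
have delta_id : delta_or (@id 'I_n) id = 1.
  rewrite (delta_or_increasing_perm id (K := id) (rho := 1%g) incr_id); last first.
    by move=> s; rewrite perm1.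
  by case: forallP => // -[] s.
rewrite delta_id mulr1 (eq_eps _ (I' := @rev_ord n)); last by move=> s; rewrite /mrev ffun_id.
rewrite (eq_cdet q M (frefl id) ffun_id) (eq_cdet (pinv p) Minv ffun_id (frefl id)) => E.
have eps_rev_neq0 : eps p (@rev_ord n) != 0.
  apply/eqP => eps0; have := eps_pinv Hp (@rev_ord_inj n).
  by rewrite eps0 mul0r => /esym/eqP; rewrite oner_eq0.
apply: (scalerI eps_rev_neq0).
by rewrite E scalerA mulrA mulfV // mul1r (eq_eps q (I' := @rev_ord n)).
Qed.

End ManinInverse.

Theorem mainTheorem6 (n : nat) (q p : 'M[CC]_n) (A : algType CC)
    (M Minv : 'M[A]_n) :
  parametric q -> parametric p -> manin q p M ->
  M *m Minv = 1%:M -> Minv *m M = 1%:M ->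
  (forall (m : nat) (I J : 'I_m -> 'I_n),
      (1 <= m)%N -> (m <= n)%N -> increasing I -> injective J ->
      \sum_(K : {ffun 'I_m -> 'I_n} | [forall s : 'I_m, forall t : 'I_m,
                                          (s < t)%N ==> (K s < K t)%N])
         eps p (mrev K) *: (cdet q M I K * cdet (pinv p) Minv K J)
      = (eps q (mrev J) * delta_or I J)%:A)
  /\
  cdet q M id id * cdet (pinv p) Minv id id
    = ((eps p (@rev_ord n))^-1 * eps q (@rev_ord n))%:A.
Proof.
move=> Hq Hp HM HMMinv _; split; last exact: cdet_mul_cdet_inverse.
by move=> m I J _ _; apply: cdet_minor_inverse_sum.
Qed.
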